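(* Let $0<a\le 1$, $b=2-a$, $\tfrac12<c_1<1$, and let $(k_a(t),k_b(t))$ be the Markov chain $K$ described in the context, started from any state with $k_a+k_b\ge 2c_1 n$. Let $\tau$ be the hitting time of $(n,n)$. Then there is a constant $C$ depending only on $a,c_1$ such that, uniformly over such starting states, $$\mathbb{E}\,\tau\le \frac{n}{a(2c_1-1)}\big[\log 2n+\log\log 2n+C\big].$$
   Context: The chain $K$ (it records the numbers $k_a,k_b$ of marked $a$-cards and marked $b$-cards in the second marking phase of a biased transposition shuffle of $N=2n$ cards, $n$ of each type). Its states are pairs $(k_a,k_b)$ of integers with $0\le k_a,k_b\le n$ and $k_a+k_b\ge n$. From $(k_a,k_b)$ it moves to $(k_a,k_b+1)$ with probability $\frac{2ab(n-k_b)(k_a+k_b+1)}{(2n)^2}$; to $(k_a+1,k_b)$ with probability $\frac{2a^2(n-k_a)(k_a+k_b+1)}{(2n)^2}$; to $(k_a+1,k_b-1)$ with probability $\frac{2a(b-a)(n-k_a)k_b}{(2n)^2}$; and otherwise stays put. *)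

From Stdlib Require Import Reals List Arith Bool.
Import ListNotations.
Open Scope R_scope.
Open Scope bool_scope.

Definition sumR (l : list R) : R := fold_right Rplus 0 l.

Definition states (n : nat) : list (nat * nat) :=
  list_prod (seq 0 (S n)) (seq 0 (S n)).

Definition state_eqb (s t : nat * nat) : bool :=
  Nat.eqb (fst s) (fst t) && Nat.eqb (snd s) (snd t).

Definition is_target (n : nat) (s : nat * nat) : bool := state_eqb s (n, n).

Definition Kp (n : nat) (a : R) (s s' : nat * nat) : R :=
  let ka := fst s in let kb := snd s in
  let b := 2 - a in
  let N2 := (2 * INR n) ^ 2 in
  let p_b := 2 * a * b * (INR n - INR kb) * (INR ka + INR kb + 1) / N2 in
  let p_a := 2 * a ^ 2 * (INR n - INR ka) * (INR ka + INR kb + 1) / N2 in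
  let p_s := 2 * a * (b - a) * (INR n - INR ka) * INR kb / N2 in
  if state_eqb s' (ka, S kb) then p_b
  else if state_eqb s' (S ka, kb) then p_a
  else if Nat.eqb (fst s') (S ka) && Nat.eqb (S (snd s')) kb then p_s
  else if state_eqb s' s then 1 - p_b - p_a - p_s
  else 0.

(* qdist n a s0 t s = P_{s0}( K(t) = s  and  tau > t ), where tau is the
   hitting time of (n,n) (tau = 0 if s0 = (n,n)). *)
Fixpoint qdist (n : nat) (a : R) (s0 : nat * nat) (t : nat) : nat * nat -> R :=
  match t with
  | O => fun s => if is_target n s then 0
                  else if state_eqb s s0 then 1 else 0
  | S t' => fun s' => if is_target n s' then 0
                      else sumR (map (fun s => qdist n a s0 t' s * Kp n a s s')
                                     (states n))
  end.

Definition tail_prob (n : nat) (a : R) (s0 : nat * nat) (t : nat) : R :=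
  sumR (map (qdist n a s0 t) (states n)).

(* Partial tail sums: E tau = sup_T sum_{t=0}^T P(tau > t)  (in [0,+oo]). *)
Definition Etau_partial (n : nat) (a : R) (s0 : nat * nat) (T : nat) : R :=
  sum_f_R0 (fun t => tail_prob n a s0 t) T.

From Stdlib Require Import Reals List Arith ZArith Lra Lia Psatz.
Open Scope R_scope.

(* A Lyapunov argument. Put [lam = a (2 c1 - 1) / n], [B_k = (1 - lam)^k],
   [A_k = (1 - lam)^k (1 + k lam / (1 - lam))] and
   [L_k (ka, kb) = (n - ka) A_k + (n - kb) B_k].
   The chain never decreases [ka + kb], so it stays in the region [ka + kb >= 2 c1 n], where
   [p_a + p_s >= lam (n - ka)] and [p_b >= lam (n - kb)]; there one step of [K] maps [L_k]
   below [L_(k+1)].  Since [L_0 >= 1] away from [(n, n)], this gives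
   [P(tau > t) <= L_t (start) <= 2 n A_t].  Finally [A_t = G_t - G_(t+1)] for
   [G_t = (1 - lam)^t (2 / lam + t / (1 - lam))], so summing [min (1, 2 n A_t)] and cutting at
   [t ~ (log 2n + log log 2n) / lam] gives the bound. *)

Lemma Rdiv_nonneg x y : 0 <= x -> 0 < y -> 0 <= x / y.
Proof. intros. unfold Rdiv. apply Rmult_le_pos; [|left; apply Rinv_0_lt_compat]; auto. Qed.

Lemma exists_nat_between x : 0 <= x -> exists N : nat, x <= INR N <= x + 1.
Proof.
  intros Hx. destruct (archimed x) as [Hup1 Hup2].
  exists (Z.to_nat (up x)). rewrite INR_IZR_INZ, Z2Nat.id; [lra|].
  apply le_IZR. lra.
Qed.

Lemma exp_le_compat x y : x <= y -> exp x <= exp y.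
Proof. intros [Hlt | ->]; [left; apply exp_increasing | right]; auto. Qed.

Lemma ln_le_compat x y : 0 < x -> x <= y -> ln x <= ln y.
Proof. intros Hx [Hlt | ->]; [left; apply ln_increasing | right]; auto. Qed.

Lemma ln_le_sub_1 x : 0 < x -> ln x <= x - 1.
Proof. intros Hx. pose proof (exp_ineq1_le (ln x)). rewrite exp_ln in *; lra. Qed.

Lemma ln_bounds x : 2 <= x -> / 2 < ln x /\ - ln x <= ln (ln x).
Proof.
  intros Hx.
  assert (HL : / 2 < ln x) by (pose proof ln_lt_2; pose proof (ln_le_compat 2 x); lra).
  split; [exact HL|].
  rewrite <- (ln_exp (- ln x)). apply ln_le_compat; [apply exp_pos|].
  rewrite exp_Ropp, exp_ln by lra.
  apply Rle_trans with (/ 2); [apply Rinv_le_contravar|]; lra.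
Qed.

Lemma pow_le_exp_neg lam N : 0 <= lam < 1 -> (1 - lam) ^ N <= exp (- (lam * INR N)).
Proof.
  intros Hlam. rewrite <- Rpower_pow by lra. unfold Rpower.
  apply exp_le_compat.
  pose proof (ln_le_sub_1 (1 - lam)). pose proof (pos_INR N). nra.
Qed.

Lemma sum_f_R0_le_telescope (f G : nat -> R) (M : R) (N0 T : nat) :
  0 <= M -> (forall t, 0 <= G t) -> (forall t, f t <= 1) ->
  (forall t, f t <= M * (G t - G (S t))) ->
  sum_f_R0 f T <= INR N0 + M * G N0.
Proof.
  intros HM HG Hf1 HfG.
  (* The first [min (S T) N0] terms are bounded by [1], the remaining ones telescope. *)
  assert (Hsplit : forall T, sum_f_R0 f T <=
            INR (Nat.min (S T) N0) + M * (G N0 - G (Nat.max (S T) N0))).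
  { intros T'. induction T' as [|T' IH]; simpl sum_f_R0.
    - destruct N0 as [|N0]; simpl Nat.min; simpl Nat.max.
      + specialize (HfG 0%nat). simpl INR. lra.
      + specialize (Hf1 0%nat). simpl INR. lra.
    - destruct (Nat.le_gt_cases (S (S T')) N0).
      + replace (Nat.min (S T') N0) with (S T') in IH by lia.
        replace (Nat.max (S T') N0) with N0 in IH by lia.
        replace (Nat.min (S (S T')) N0) with (S (S T')) by lia.
        replace (Nat.max (S (S T')) N0) with N0 by lia.
        rewrite (S_INR (S T')). specialize (Hf1 (S T')). lra.
      + replace (Nat.min (S T') N0) with N0 in IH by lia.
        replace (Nat.max (S T') N0) with (S T') in IH by lia.
        replace (Nat.min (S (S T')) N0) with N0 by lia.
        replace (Nat.max (S (S T')) N0) with (S (S T')) by lia.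
        specialize (HfG (S T')). lra. }
  specialize (Hsplit T).
  assert (INR (Nat.min (S T) N0) <= INR N0) by (apply le_INR; lia).
  assert (0 <= M * G (Nat.max (S T) N0)) by (apply Rmult_le_pos; auto).
  lra.
Qed.

Section SumR.
Variable T : Type.
Implicit Types (f g : T -> R) (l : list T).

Lemma sumR_map_add f g l :
  sumR (map (fun x => f x + g x) l) = sumR (map f l) + sumR (map g l).
Proof. induction l as [|x l IH]; simpl; [ring | rewrite IH; ring]. Qed.

Lemma sumR_map_mull c f l : sumR (map (fun x => c * f x) l) = c * sumR (map f l).
Proof. induction l as [|x l IH]; simpl; [ring | rewrite IH; ring]. Qed.

Lemma sumR_map_mulr c f l : sumR (map (fun x => f x * c) l) = sumR (map f l) * c.
Proof. induction l as [|x l IH]; simpl; [ring | rewrite IH; ring]. Qed.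

Lemma sumR_map_ext f g l :
  (forall x, In x l -> f x = g x) -> sumR (map f l) = sumR (map g l).
Proof.
  induction l as [|x l IH]; intros Hfg; simpl; [reflexivity|].
  rewrite Hfg, IH; auto using in_eq, in_cons.
Qed.

Lemma sumR_map_le f g l :
  (forall x, In x l -> f x <= g x) -> sumR (map f l) <= sumR (map g l).
Proof.
  induction l as [|x l IH]; intros Hfg; simpl; [lra|].
  apply Rplus_le_compat; auto using in_eq, in_cons.
Qed.

Lemma sumR_map_nonneg f l : (forall x, In x l -> 0 <= f x) -> 0 <= sumR (map f l).
Proof.
  induction l as [|x l IH]; intros Hf; simpl; [lra|].
  apply Rplus_le_le_0_compat; auto using in_eq, in_cons.
Qed.

Lemma sumR_map_eq0 f l : (forall x, In x l -> f x = 0) -> sumR (map f l) = 0.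
Proof.
  induction l as [|x l IH]; intros Hf; simpl; [reflexivity|].
  rewrite Hf, IH; auto using in_eq, in_cons; ring.
Qed.

Lemma sumR_map_point (e : T -> bool) x c l :
  NoDup l -> (forall y, reflect (y = x) (e y)) -> (~ In x l -> c = 0) ->
  sumR (map (fun y => if e y then c else 0) l) = c.
Proof.
  intros Hl He. induction Hl as [|y l Hy Hl IH]; intros Hc; simpl.
  - symmetry; apply Hc; auto.
  - destruct (He y) as [-> | Hne].
    + rewrite sumR_map_eq0; [ring|].
      intros z Hz. destruct (He z) as [->|]; [contradiction | reflexivity].
    + rewrite IH; [ring|]. intros Hx. apply Hc. intros [|]; auto.
Qed.

End SumR.

Lemma sumR_map_swap {T U : Type} (F : T -> U -> R) l1 l2 :
  sumR (map (fun y => sumR (map (fun x => F x y) l1)) l2)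
  = sumR (map (fun x => sumR (map (fun y => F x y) l2)) l1).
Proof.
  induction l1 as [|x l1 IH]; simpl.
  - apply sumR_map_eq0; auto.
  - rewrite (sumR_map_add _ (fun y => F x y)), IH. reflexivity.
Qed.

Lemma NoDup_list_prod {A B : Type} (l : list A) (l' : list B) :
  NoDup l -> NoDup l' -> NoDup (list_prod l l').
Proof.
  intros Hl Hl'. induction Hl as [|x l Hx Hl IH]; simpl; [constructor|].
  apply NoDup_app; auto.
  - apply NoDup_map_NoDup_ForallPairs; auto. intros y z _ _ E. now injection E.
  - intros p Hp Hp'. apply in_map_iff in Hp as [y [<- _]].
    apply in_prod_iff in Hp' as [? _]. contradiction.
Qed.

Lemma state_eqb_spec (s t : nat * nat) : reflect (s = t) (state_eqb s t).
Proof.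
  destruct s as [x y], t as [x' y']; unfold state_eqb; simpl.
  destruct (Nat.eqb_spec x x'), (Nat.eqb_spec y y'); simpl; constructor; congruence.
Qed.

Lemma is_target_spec n s : reflect (s = (n, n)) (is_target n s).
Proof. apply state_eqb_spec. Qed.

Lemma In_states n s : In s (states n) <-> (fst s <= n)%nat /\ (snd s <= n)%nat.
Proof. destruct s as [x y]. unfold states. rewrite in_prod_iff, !in_seq. simpl. lia. Qed.

Lemma sumR_states_point n p c : (~ In p (states n) -> c = 0) ->
  sumR (map (fun s => if state_eqb s p then c else 0) (states n)) = c.
Proof.
  apply sumR_map_point; [apply NoDup_list_prod; apply seq_NoDup | intros; apply state_eqb_spec].
Qed.

Lemma not_target_lt n ka kb : (ka <= n)%nat -> (kb <= n)%nat -> is_target n (ka, kb) = false ->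
  INR ka + INR kb + 1 <= 2 * INR n.
Proof.
  intros Hka Hkb Ht. destruct (is_target_spec n (ka, kb)) as [|Hne]; [discriminate|].
  assert (Hlt : (ka + kb + 1 <= 2 * n)%nat).
  { destruct (Nat.eq_dec ka n), (Nat.eq_dec kb n); subst; [congruence | lia..]. }
  apply le_INR in Hlt. rewrite !plus_INR, mult_INR in Hlt. simpl in Hlt. lra.
Qed.

Definition rate_b n a ka kb :=
  2 * a * (2 - a) * (INR n - INR kb) * (INR ka + INR kb + 1) / (2 * INR n) ^ 2.
Definition rate_a n a ka kb :=
  2 * a ^ 2 * (INR n - INR ka) * (INR ka + INR kb + 1) / (2 * INR n) ^ 2.
Definition rate_swap n a ka kb :=
  2 * a * ((2 - a) - a) * (INR n - INR ka) * INR kb / (2 * INR n) ^ 2.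
Definition rate_stay n a ka kb :=
  1 - rate_b n a ka kb - rate_a n a ka kb - rate_swap n a ka kb.

Lemma rate_swap_0 n a ka : rate_swap n a ka 0 = 0.
Proof. unfold rate_swap, Rdiv. simpl INR. ring. Qed.

(* For [kb = 0] the points [(S ka, kb)] and [(S ka, pred kb)] coincide; this is harmless
   because [rate_swap] then vanishes. *)
Lemma Kp_decomp n a ka kb s :
  Kp n a (ka, kb) s =
    (if state_eqb s (ka, S kb) then rate_b n a ka kb else 0) +
    (if state_eqb s (S ka, kb) then rate_a n a ka kb else 0) +
    (if state_eqb s (S ka, pred kb) then rate_swap n a ka kb else 0) +
    (if state_eqb s (ka, kb) then rate_stay n a ka kb else 0).
Proof.
  destruct s as [x y].
  change (Kp n a (ka, kb) (x, y)) with
    (if state_eqb (x, y) (ka, S kb) then rate_b n a ka kb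
     else if state_eqb (x, y) (S ka, kb) then rate_a n a ka kb
     else if Nat.eqb x (S ka) && Nat.eqb (S y) kb then rate_swap n a ka kb
     else if state_eqb (x, y) (ka, kb) then rate_stay n a ka kb else 0).
  destruct (state_eqb_spec (x, y) (ka, S kb)) as [E1|N1],
    (state_eqb_spec (x, y) (S ka, kb)) as [E2|N2],
    (Nat.eqb_spec x (S ka)), (Nat.eqb_spec (S y) kb),
    (state_eqb_spec (x, y) (S ka, pred kb)) as [E3|N3],
    (state_eqb_spec (x, y) (ka, kb)) as [E4|N4]; simpl;
  repeat match goal with H : (_, _) = (_, _) |- _ => injection H as ?H ?H end;
  subst; try (exfalso; lia); try ring;
  first [ exfalso; simpl in *; congruence
        | assert (kb = 0)%nat by lia; subst; rewrite rate_swap_0; ring ].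
Qed.

Lemma if_state_eqb_mul s p c (h : nat * nat -> R) :
  (if state_eqb s p then c else 0) * h s = if state_eqb s p then c * h p else 0.
Proof. destruct (state_eqb_spec s p) as [->|]; ring. Qed.

Lemma Kp_expect n a ka kb (h : nat * nat -> R) : (ka <= n)%nat -> (kb <= n)%nat ->
  sumR (map (fun s => Kp n a (ka, kb) s * h s) (states n)) =
  rate_b n a ka kb * h (ka, S kb) + rate_a n a ka kb * h (S ka, kb)
  + rate_swap n a ka kb * h (S ka, pred kb) + rate_stay n a ka kb * h (ka, kb).
Proof.
  intros Hka Hkb.
  rewrite (sumR_map_ext _ _ (fun s =>
      (if state_eqb s (ka, S kb) then rate_b n a ka kb * h (ka, S kb) else 0) +
      (if state_eqb s (S ka, kb) then rate_a n a ka kb * h (S ka, kb) else 0) +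
      (if state_eqb s (S ka, pred kb) then rate_swap n a ka kb * h (S ka, pred kb) else 0) +
      (if state_eqb s (ka, kb) then rate_stay n a ka kb * h (ka, kb) else 0))).
  2: { intros s _. rewrite Kp_decomp, !Rmult_plus_distr_r, !if_state_eqb_mul. reflexivity. }
  (* A neighbour outside the grid is only proposed with rate 0. *)
  rewrite !sumR_map_add, !sumR_states_point; [reflexivity | ..];
    intros Hout; rewrite In_states in Hout; simpl in Hout;
    first [ exfalso; lia
          | assert (ka = n) by lia; subst; unfold rate_a, rate_swap, Rdiv; ring
          | assert (kb = n) by lia; subst; unfold rate_b, Rdiv; ring ].
Qed.

Lemma Kp_neq0_sum_le n a ka kb s :
  Kp n a (ka, kb) s <> 0 -> (ka + kb <= fst s + snd s)%nat.
Proof.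
  rewrite Kp_decomp. intros HK.
  destruct (state_eqb_spec s (ka, S kb)) as [E|]; [rewrite E; simpl; lia|].
  destruct (state_eqb_spec s (S ka, kb)) as [E|]; [rewrite E; simpl; lia|].
  destruct (state_eqb_spec s (S ka, pred kb)) as [E|]; [rewrite E; simpl; lia|].
  destruct (state_eqb_spec s (ka, kb)) as [E|]; [rewrite E; simpl; lia|].
  exfalso. apply HK. ring.
Qed.

Definition above_line (n : nat) (c1 : R) (s : nat * nat) : Prop :=
  2 * c1 * INR n <= INR (fst s) + INR (snd s).

Lemma above_line_Kp n a c1 s s' :
  above_line n c1 s -> Kp n a s s' <> 0 -> above_line n c1 s'.
Proof.
  destruct s as [ka kb]. unfold above_line. simpl. intros Hs HK.
  apply Kp_neq0_sum_le, le_INR in HK. rewrite !plus_INR in HK. lra.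
Qed.

Definition lam n a c1 := a * (2 * c1 - 1) / INR n.

Section Rates.
Variables (n : nat) (a : R) (ka kb : nat).
Hypotheses (Hn : (1 <= n)%nat) (Ha0 : 0 <= a) (Ha1 : a <= 1)
  (Hka : (ka <= n)%nat) (Hkb : (kb <= n)%nat).

Let HN : 1 <= INR n. Proof. apply (le_INR 1); assumption. Qed.
Let HX : 0 <= INR ka <= INR n. Proof. split; [apply pos_INR | apply le_INR; assumption]. Qed.
Let HY : 0 <= INR kb <= INR n. Proof. split; [apply pos_INR | apply le_INR; assumption]. Qed.
Let HD : 0 < (2 * INR n) ^ 2. Proof. apply pow_lt. lra. Qed.

Lemma rates_nonneg :
  0 <= rate_b n a ka kb /\ 0 <= rate_a n a ka kb /\ 0 <= rate_swap n a ka kb.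
Proof.
  unfold rate_b, rate_a, rate_swap.
  repeat split; apply Rdiv_nonneg; auto; repeat (apply Rmult_le_pos || apply pow_le); lra.
Qed.

Lemma rate_stay_nonneg :
  INR n <= INR ka + INR kb -> INR ka + INR kb + 1 <= 2 * INR n ->
  0 <= rate_stay n a ka kb.
Proof.
  intros Hlow Hup. unfold rate_stay, rate_b, rate_a, rate_swap.
  set (N := INR n) in *; set (X := INR ka) in *; set (Y := INR kb) in *.
  set (u := N - X); set (v := N - Y).
  set (W := (2 - a) * v * (X + Y + 1) + a * u * (X + Y + 1) + (2 - 2 * a) * u * Y).
  apply Rle_trans with (((2 * N) ^ 2 - 2 * a * W) / (2 * N) ^ 2).
  2: { right. unfold W, u, v. field. lra. }
  apply Rdiv_nonneg; [|exact HD].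
  assert (HW : W <= 2 * (2 - a) * N * N).
  { assert (W <= (2 - a) * v * (2 * N) + a * u * (2 * N) + (2 - 2 * a) * u * N).
    { unfold W, u, v. apply Rplus_le_compat; [apply Rplus_le_compat|];
        apply Rmult_le_compat_l; try lra; repeat apply Rmult_le_pos; lra. }
    assert (0 <= u * N * (1 - a)) by (repeat apply Rmult_le_pos; unfold u; lra).
    assert (2 * (2 - a) * N * (u + v) <= 2 * (2 - a) * N * N)
      by (apply Rmult_le_compat_l; [nra | unfold u, v; lra]).
    lra. }
  assert (0 <= (1 - a) ^ 2 * (N * N)) by (apply Rmult_le_pos; nra).
  nra.
Qed.

Lemma rate_b_ge c1 :
  c1 <= 1 -> 2 * c1 * INR n <= INR ka + INR kb ->
  lam n a c1 * (INR n - INR kb) <= rate_b n a ka kb.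
Proof.
  intros Hc1 Hs. unfold lam, rate_b.
  set (N := INR n) in *; set (X := INR ka) in *; set (Y := INR kb) in *.
  set (gap := (2 - a) * (X + Y + 1) - 2 * (2 * c1 - 1) * N).
  apply Rle_trans with (a * (2 * c1 - 1) / N * (N - Y) + 2 * a * (N - Y) * gap / (2 * N) ^ 2).
  2: { right. unfold gap. field. lra. }
  assert (0 <= gap).
  { assert (0 <= (1 - a) * (X + Y + 1)) by (apply Rmult_le_pos; lra).
    assert (0 <= (1 - c1) * N) by (apply Rmult_le_pos; lra).
    unfold gap. lra. }
  assert (0 <= 2 * a * (N - Y) * gap / (2 * N) ^ 2).
  { apply Rdiv_nonneg; [repeat apply Rmult_le_pos|]; lra. }
  lra.
Qed.

Lemma rate_a_swap_ge c1 :
  c1 <= 1 -> 2 * c1 * INR n <= INR ka + INR kb ->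
  lam n a c1 * (INR n - INR ka) <= rate_a n a ka kb + rate_swap n a ka kb.
Proof.
  intros Hc1 Hs. unfold lam, rate_a, rate_swap.
  set (N := INR n) in *; set (X := INR ka) in *; set (Y := INR kb) in *.
  set (gap := a * (X + Y + 1) + (2 - 2 * a) * Y - 2 * (2 * c1 - 1) * N).
  apply Rle_trans with (a * (2 * c1 - 1) / N * (N - X) + 2 * a * (N - X) * gap / (2 * N) ^ 2).
  2: { right. unfold gap. field. lra. }
  assert (0 <= gap).
  { assert (a * (2 * (2 * c1 - 1) * N) <= a * (X + Y + 1))
      by (apply Rmult_le_compat_l; [|assert (0 <= (1 - c1) * N) by (apply Rmult_le_pos; lra)]; lra).
    assert ((2 - 2 * a) * ((2 * c1 - 1) * N) <= (2 - 2 * a) * Y)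
      by (apply Rmult_le_compat_l; lra).
    unfold gap. lra. }
  assert (0 <= 2 * a * (N - X) * gap / (2 * N) ^ 2).
  { apply Rdiv_nonneg; [repeat apply Rmult_le_pos|]; lra. }
  lra.
Qed.
End Rates.

Section Lyapunov.
Variable lam : R.

Definition lyapB k := (1 - lam) ^ k.
Definition lyapA k := (1 - lam) ^ k * (1 + INR k * lam / (1 - lam)).
Definition lyapG k := (1 - lam) ^ k * (2 / lam + INR k / (1 - lam)).

Hypotheses (Hlam0 : 0 < lam) (Hlam1 : lam < 1).

Lemma lyapA_0 : lyapA 0 = 1.
Proof. unfold lyapA. simpl. unfold Rdiv. ring. Qed.

Lemma lyapB_0 : lyapB 0 = 1.
Proof. reflexivity. Qed.

Lemma lyapA_S k : lyapA (S k) = (1 - lam) * lyapA k + lam * lyapB k.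
Proof. unfold lyapA, lyapB. rewrite S_INR. simpl pow. field. lra. Qed.

Lemma lyapB_S k : lyapB (S k) = (1 - lam) * lyapB k.
Proof. reflexivity. Qed.

Lemma lyapB_nonneg k : 0 <= lyapB k.
Proof. apply pow_le. lra. Qed.

Lemma lyapB_le_A k : lyapB k <= lyapA k.
Proof.
  unfold lyapA, lyapB.
  assert (0 <= INR k * lam / (1 - lam))
    by (apply Rdiv_nonneg; [apply Rmult_le_pos; [apply pos_INR|]|]; lra).
  assert (0 <= (1 - lam) ^ k) by (apply pow_le; lra).
  nra.
Qed.

Lemma lyapG_telescope k : lyapG k - lyapG (S k) = lyapA k.
Proof. unfold lyapG, lyapA. rewrite S_INR. simpl pow. field. lra. Qed.

Lemma lyapG_nonneg k : 0 <= lyapG k.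
Proof.
  unfold lyapG. apply Rmult_le_pos; [apply pow_le; lra|].
  apply Rplus_le_le_0_compat; apply Rdiv_nonneg; try apply pos_INR; lra.
Qed.

End Lyapunov.

(* An [a]-move lowers the potential by [A] and a swap by [A - B] (total rate [pa + ps]),
   a [b]-move lowers it by [B] (rate [pb]). *)
Lemma lyap_drift_ineq lam u v A B pb pa ps :
  0 <= pa -> 0 <= B <= A -> lam * u <= pa + ps -> lam * v <= pb ->
  pb * (u * A + (v - 1) * B) + pa * ((u - 1) * A + v * B)
  + ps * ((u - 1) * A + (v + 1) * B) + (1 - pb - pa - ps) * (u * A + v * B)
  <= u * ((1 - lam) * A + lam * B) + v * ((1 - lam) * B).
Proof.
  intros Hpa [HB HBA] Hu Hv.
  assert (lam * u * (A - B) <= (pa + ps) * (A - B)) by (apply Rmult_le_compat_r; lra).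
  assert (lam * v * B <= pb * B) by (apply Rmult_le_compat_r; lra).
  assert (0 <= pa * B) by (apply Rmult_le_pos; lra).
  nra.
Qed.

Definition lyap n lam k (s : nat * nat) :=
  (INR n - INR (fst s)) * lyapA lam k + (INR n - INR (snd s)) * lyapB lam k.

(* [exp L] stands for [2 n]: the cut [lam N0 >= L + ln L] makes [(1 - lam) ^ N0 <= / (exp L * L)],
   which cancels [exp L] and, since [N0 <= 2 L / lam], the linear growth of [lyapG]. *)
Lemma lyapG_cut_le lam d L N0 :
  0 < lam -> 0 < d <= 1 - lam -> / 2 < L ->
  (L + ln L) / lam <= INR N0 <= (L + ln L) / lam + 1 ->
  exp L * lyapG lam N0 <= (4 + 2 / d) / lam.
Proof.
  intros Hlam [Hd HdL] HL [HN0l HN0u].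
  pose proof (pos_INR N0). pose proof (ln_le_sub_1 L).
  assert (Hpow : (1 - lam) ^ N0 <= exp (- L) / L).
  { eapply Rle_trans; [apply pow_le_exp_neg; lra|].
    apply (Rmult_le_compat_l lam) in HN0l; [|lra].
    replace (lam * ((L + ln L) / lam)) with (L + ln L) in HN0l by (field; lra).
    eapply Rle_trans; [apply exp_le_compat; apply Ropp_le_contravar, HN0l|].
    right. rewrite Ropp_plus_distr, exp_plus, (exp_Ropp (ln L)), exp_ln by lra. reflexivity. }
  assert (HN0 : INR N0 <= 2 * L / lam).
  { assert (1 <= / lam) by (rewrite <- Rinv_1; apply Rinv_le_contravar; lra).
    assert ((L + ln L) / lam <= (2 * L - 1) / lam)
      by (unfold Rdiv; apply Rmult_le_compat_r; [left; apply Rinv_0_lt_compat|]; lra).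
    replace ((2 * L - 1) / lam) with (2 * L / lam - / lam) in * by (field; lra).
    lra. }
  set (X := 2 / lam + INR N0 / (1 - lam)).
  assert (HX : X <= 2 / lam + 2 * L / lam / d).
  { unfold X. apply Rplus_le_compat_l. unfold Rdiv at 1 2.
    apply Rmult_le_compat; try lra; [apply Rlt_le, Rinv_0_lt_compat; lra|].
    apply Rinv_le_contravar; lra. }
  unfold lyapG. fold X.
  apply Rle_trans with (exp L * (exp (- L) / L * X)).
  { apply Rmult_le_compat_l; [left; apply exp_pos|].
    apply Rmult_le_compat_r; [|exact Hpow].
    unfold X. apply Rplus_le_le_0_compat; apply Rdiv_nonneg; lra. }
  replace (exp L * (exp (- L) / L * X)) with (X / L)
    by (rewrite exp_Ropp; pose proof (exp_pos L); field; repeat split; lra).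
  apply Rle_trans with ((2 / lam + 2 * L / lam / d) / L).
  { unfold Rdiv at 1 3. apply Rmult_le_compat_r; [apply Rlt_le, Rinv_0_lt_compat; lra | exact HX]. }
  replace ((2 / lam + 2 * L / lam / d) / L) with ((2 / L + 2 / d) / lam) by (field; lra).
  unfold Rdiv at 1 3. apply Rmult_le_compat_r; [apply Rlt_le, Rinv_0_lt_compat; lra|].
  assert (2 / L <= 4).
  { apply Rmult_le_reg_r with L; [lra|]. replace (2 / L * L) with 2 by (field; lra). lra. }
  unfold Rdiv. lra.
Qed.

Section Chain.
Variables (n : nat) (a c1 : R).
Hypotheses (Hn : (1 <= n)%nat) (Ha0 : 0 < a) (Ha1 : a <= 1) (Hc0 : / 2 < c1) (Hc1 : c1 < 1).

Let Ha0le : 0 <= a. Proof. lra. Qed.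
Let HN : 1 <= INR n. Proof. apply (le_INR 1); assumption. Qed.

Lemma lam_pos : 0 < lam n a c1.
Proof. unfold lam. apply Rdiv_lt_0_compat; nra. Qed.

Lemma lam_le : lam n a c1 <= a * (2 * c1 - 1).
Proof.
  unfold lam. assert (0 < a * (2 * c1 - 1)) by nra.
  unfold Rdiv. rewrite <- (Rmult_1_r (a * (2 * c1 - 1))) at 2.
  apply Rmult_le_compat_l; [lra|]. rewrite <- Rinv_1. apply Rinv_le_contravar; lra.
Qed.

Lemma lam_lt_1 : lam n a c1 < 1.
Proof. pose proof lam_le. nra. Qed.

Lemma Kp_nonneg s s' : In s (states n) -> above_line n c1 s -> is_target n s = false ->
  0 <= Kp n a s s'.
Proof.
  destruct s as [ka kb]. rewrite In_states. unfold above_line. cbn [fst snd].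
  intros [Hka Hkb] Hs Ht.
  pose proof (not_target_lt n ka kb Hka Hkb Ht).
  assert (INR n <= INR ka + INR kb) by nra.
  destruct (rates_nonneg n a ka kb Hn Ha0le Ha1 Hka Hkb) as (Hb & Ha & Hsw).
  assert (0 <= rate_stay n a ka kb) by (apply rate_stay_nonneg; assumption).
  rewrite Kp_decomp.
  repeat apply Rplus_le_le_0_compat; match goal with |- context [if ?e then _ else _] => destruct e end; lra.
Qed.

Lemma Kp_lyap_drift k s : In s (states n) -> above_line n c1 s -> is_target n s = false ->
  sumR (map (fun s' => Kp n a s s' * lyap n (lam n a c1) k s') (states n))
  <= lyap n (lam n a c1) (S k) s.
Proof.
  destruct s as [ka kb]. rewrite In_states. unfold above_line. cbn [fst snd].
  intros [Hka Hkb] Hs Ht.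
  pose proof lam_pos. pose proof lam_lt_1.
  destruct (rates_nonneg n a ka kb Hn Ha0le Ha1 Hka Hkb) as (Hb & Ha & Hsw).
  rewrite (Kp_expect n a ka kb (lyap n (lam n a c1) k)) by assumption.
  set (l := lam n a c1) in *.
  set (u := INR n - INR ka); set (v := INR n - INR kb).
  set (A := lyapA l k); set (B := lyapB l k).
  assert (Hswap : rate_swap n a ka kb * lyap n l k (S ka, pred kb)
                  = rate_swap n a ka kb * ((u - 1) * A + (v + 1) * B)).
  { destruct kb as [|kb].
    - rewrite rate_swap_0. ring.
    - unfold lyap, u, v, A, B. cbn [fst snd pred]. rewrite !S_INR. ring. }
  rewrite Hswap.
  unfold lyap. cbn [fst snd]. rewrite lyapA_S, lyapB_S by lra.
  rewrite !S_INR. fold A B.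
  replace (INR n - (INR ka + 1)) with (u - 1) by (unfold u; ring).
  replace (INR n - (INR kb + 1)) with (v - 1) by (unfold v; ring).
  fold u v. unfold rate_stay.
  apply lyap_drift_ineq; auto.
  - split; [apply lyapB_nonneg | apply lyapB_le_A]; lra.
  - apply rate_a_swap_ge; assumption || lra.
  - apply rate_b_ge; assumption || lra.
Qed.

Section Killed.
Variable s0 : nat * nat.
Hypotheses (Hs0 : In s0 (states n)) (Hline0 : above_line n c1 s0).

Lemma qdist_cases t s :
  qdist n a s0 t s = 0 \/
  (above_line n c1 s /\ is_target n s = false /\ 0 <= qdist n a s0 t s).
Proof.
  revert s; induction t as [|t IH]; intros s; cbn [qdist].
  - destruct (is_target n s) eqn:Ht; [left; reflexivity|].
    destruct (state_eqb_spec s s0) as [E|]; [|left; reflexivity].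
    right. rewrite E. repeat split; [assumption | lra].
  - destruct (is_target n s) eqn:Ht; [left; reflexivity|].
    destruct (Rle_dec (2 * c1 * INR n) (INR (fst s) + INR (snd s))) as [Hs|Hs].
    + right. split; [exact Hs | split; [reflexivity|]].
      apply sumR_map_nonneg. intros s' Hs'.
      destruct (IH s') as [->|(Hl' & Ht' & Hq)]; [lra|].
      apply Rmult_le_pos; [assumption | apply Kp_nonneg; assumption].
    + left. apply sumR_map_eq0. intros s' _.
      destruct (Req_dec (Kp n a s' s) 0) as [->|HK]; [ring|].
      destruct (IH s') as [->|(Hl' & _)]; [ring|].
      exfalso. apply Hs. exact (above_line_Kp n a c1 s' s Hl' HK).
Qed.

Lemma qdist_step_le (h h' : nat * nat -> R) t :
  (forall s, In s (states n) -> above_line n c1 s -> is_target n s = false ->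
     sumR (map (fun s' => Kp n a s s' * h s') (states n)) <= h' s) ->
  0 <= h (n, n) ->
  sumR (map (fun s' => qdist n a s0 (S t) s' * h s') (states n)) <=
  sumR (map (fun s => qdist n a s0 t s * h' s) (states n)).
Proof.
  intros Hdrift Htarget.
  apply Rle_trans with (sumR (map (fun s' =>
    sumR (map (fun s => qdist n a s0 t s * Kp n a s s' * h s') (states n))) (states n))).
  - apply sumR_map_le. intros s' _. cbn [qdist].
    rewrite (sumR_map_mulr _ (h s')).
    destruct (is_target_spec n s') as [->|]; [|lra].
    rewrite Rmult_0_l. apply Rmult_le_pos; [|assumption].
    apply sumR_map_nonneg. intros s Hs.
    destruct (qdist_cases t s) as [->|(Hl & Ht & Hq)]; [lra|].
    apply Rmult_le_pos; [assumption | apply Kp_nonneg; assumption].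
  - rewrite sumR_map_swap. apply sumR_map_le. intros s Hs.
    destruct (qdist_cases t s) as [->|(Hl & Ht & Hq)].
    + rewrite sumR_map_eq0; [lra | intros; ring].
    + apply Rle_trans with
        (qdist n a s0 t s * sumR (map (fun s' => Kp n a s s' * h s') (states n))).
      * right. rewrite <- sumR_map_mull. apply sumR_map_ext. intros; ring.
      * apply Rmult_le_compat_l; auto.
Qed.

Lemma qdist_0_le (h : nat * nat -> R) : 0 <= h (n, n) ->
  sumR (map (fun s => qdist n a s0 0 s * h s) (states n)) <= h s0.
Proof.
  intros Htarget.
  apply Rle_trans with (sumR (map (fun s => if state_eqb s s0 then h s0 else 0) (states n))).
  - apply sumR_map_le. intros s _. cbn [qdist].
    destruct (is_target_spec n s) as [->|].
    + destruct (state_eqb_spec (n, n) s0) as [E|]; [rewrite <- E|]; lra.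
    + destruct (state_eqb_spec s s0) as [E|]; [rewrite E|]; lra.
  - rewrite sumR_states_point; [lra | contradiction].
Qed.

Lemma qdist_expect_le (h : nat -> nat * nat -> R) :
  (forall k s, In s (states n) -> above_line n c1 s -> is_target n s = false ->
     sumR (map (fun s' => Kp n a s s' * h k s') (states n)) <= h (S k) s) ->
  (forall k, 0 <= h k (n, n)) ->
  forall t k, sumR (map (fun s => qdist n a s0 t s * h k s) (states n)) <= h (k + t)%nat s0.
Proof.
  intros Hdrift Htarget t. induction t as [|t IH]; intros k.
  - rewrite Nat.add_0_r. apply qdist_0_le, Htarget.
  - eapply Rle_trans; [apply qdist_step_le; [apply Hdrift | apply Htarget]|].
    replace (k + S t)%nat with (S k + t)%nat by lia. apply IH.
Qed.

Lemma tail_prob_le_1 t : tail_prob n a s0 t <= 1.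
Proof.
  unfold tail_prob.
  rewrite (sumR_map_ext _ _ (fun s => qdist n a s0 t s * (fun _ _ => 1) 0%nat s))
    by (intros; simpl; ring).
  refine (qdist_expect_le (fun _ _ => 1) _ _ t 0); [|intros; lra].
  intros _ [ka kb]. rewrite In_states. intros [Hka Hkb] _ _.
  rewrite (Kp_expect n a ka kb (fun _ => 1)) by assumption.
  unfold rate_stay. lra.
Qed.

Lemma tail_prob_le_lyap t : tail_prob n a s0 t <= lyap n (lam n a c1) t s0.
Proof.
  unfold tail_prob.
  apply Rle_trans with (sumR (map (fun s => qdist n a s0 t s * lyap n (lam n a c1) 0 s) (states n))).
  - apply sumR_map_le. intros [ka kb] Hs.
    destruct (qdist_cases t (ka, kb)) as [->|(_ & Ht & Hq)]; [lra|].
    apply In_states in Hs as [Hka Hkb]; cbn [fst snd] in *.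
    pose proof (not_target_lt n ka kb Hka Hkb Ht).
    assert (1 <= lyap n (lam n a c1) 0 (ka, kb))
      by (unfold lyap; rewrite lyapA_0, lyapB_0; cbn [fst snd]; lra).
    nra.
  - refine (qdist_expect_le (lyap n (lam n a c1)) Kp_lyap_drift _ t 0).
    intros k. unfold lyap. cbn [fst snd]. lra.
Qed.


Lemma tail_prob_le_lyapA t : tail_prob n a s0 t <= 2 * INR n * lyapA (lam n a c1) t.
Proof.
  pose proof lam_pos. pose proof lam_lt_1.
  eapply Rle_trans; [apply tail_prob_le_lyap|].
  destruct s0 as [ka kb]. apply In_states in Hs0 as [Hka Hkb].
  unfold lyap; cbn [fst snd] in *.
  apply le_INR in Hka, Hkb. pose proof (pos_INR ka). pose proof (pos_INR kb).
  set (A := lyapA (lam n a c1) t); set (B := lyapB (lam n a c1) t).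
  assert (0 <= B) by (apply lyapB_nonneg; lra).
  assert (B <= A) by (apply lyapB_le_A; lra).
  assert (0 <= INR ka * A) by (apply Rmult_le_pos; lra).
  assert (0 <= INR kb * B) by (apply Rmult_le_pos; lra).
  assert (INR n * B <= INR n * A) by (apply Rmult_le_compat_l; lra).
  lra.
Qed.

Lemma Etau_partial_le_cut N0 T :
  Etau_partial n a s0 T <= INR N0 + 2 * INR n * lyapG (lam n a c1) N0.
Proof.
  pose proof lam_pos. pose proof lam_lt_1.
  apply sum_f_R0_le_telescope.
  - lra.
  - intros; apply lyapG_nonneg; lra.
  - apply tail_prob_le_1.
  - intros t. rewrite lyapG_telescope by lra. apply tail_prob_le_lyapA.
Qed.

Lemma Etau_partial_le_log T :
  Etau_partial n a s0 T <=
    / lam n a c1 * (ln (2 * INR n) + ln (ln (2 * INR n)) + (5 + 2 / (1 - a * (2 * c1 - 1)))).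
Proof.
  pose proof lam_pos. pose proof lam_le. pose proof lam_lt_1.
  destruct (ln_bounds (2 * INR n)) as [HL HlnL]; [lra|].
  set (l := lam n a c1) in *. set (L := ln (2 * INR n)) in *. set (d := 1 - a * (2 * c1 - 1)).
  assert (Hl1 : 1 <= / l) by (rewrite <- Rinv_1; apply Rinv_le_contravar; lra).
  destruct (exists_nat_between ((L + ln L) / l)) as [N0 [HN0l HN0u]].
  { apply Rdiv_nonneg; lra. }
  eapply Rle_trans; [apply (Etau_partial_le_cut N0)|]. fold l.
  replace (2 * INR n) with (exp L) by (unfold L; rewrite exp_ln; lra).
  assert (Hd : 0 < d).
  { assert (0 <= (1 - a) * (2 * c1 - 1)) by (apply Rmult_le_pos; lra). unfold d; lra. }
  assert (Hcut : exp L * lyapG l N0 <= (4 + 2 / d) / l)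
    by (apply lyapG_cut_le; [lra | split; [exact Hd | unfold d; lra] | lra | split; assumption]).
  replace (/ l * (L + ln L + (5 + 2 / d))) with ((L + ln L) / l + 1 + (4 + 2 / d) / l + (/ l - 1))
    by (field; split; lra).
  lra.
Qed.

End Killed.
End Chain.

Theorem mainTheorem5 (a c1 : R) :
  0 < a -> a <= 1 -> / 2 < c1 -> c1 < 1 ->
  exists C : R,
    forall (n ka kb : nat),
      (1 <= n)%nat -> (ka <= n)%nat -> (kb <= n)%nat ->
      2 * c1 * INR n <= INR ka + INR kb ->
      forall T : nat,
        Etau_partial n a (ka, kb) T <=
          INR n / (a * (2 * c1 - 1)) *
            (ln (2 * INR n) + ln (ln (2 * INR n)) + C).
Proof.
  intros Ha Ha1 Hc Hc1.
  exists (5 + 2 / (1 - a * (2 * c1 - 1))).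
  intros n ka kb Hn Hka Hkb Hline T.
  replace (INR n / (a * (2 * c1 - 1))) with (/ lam n a c1).
  - apply Etau_partial_le_log; try assumption. apply In_states. split; assumption.
  - assert (1 <= INR n) by (apply (le_INR 1); assumption).
    assert (0 < a * (2 * c1 - 1)) by nra.
    unfold lam. field. lra.
Qed.
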